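(* Let $n\ge m\ge 1$. Let $L^\sharp_m$ be an $m$-th order Lagrangian (possibly singular and explicitly time dependent). Let $W_{n-1}$ be an arbitrary smooth function of $q^{(0)i},\dots,q^{(n-1)i}$ and $t$. Let $L_n$ be the $n$-th order Lagrangian $$L_n=L^\sharp_m+\frac{d}{dt}W_{n-1}.$$ Then $L_n$ and $L^\sharp_m$ are quantum mechanically equivalent. That is, they lead to the same quantum mechanics, with equivalence understood as the equivalence relation generated by the correspondence of Proposition 1.
   Context: Ostrogradski formalism: for an $N$-th order Lagrangian with $q^{(I)i}=d^Iq^i/dt^I$, the canonical variables are $q^{Ii}=q^{(I)i}$ and $p_{Ii}=\sum_{K=I+1}^{N}(-d/dt)^{K-I-1}\partial L/\partial q^{(K)i}$, for $I=0,\dots,N-1$. Quantization: all constraints are assumed first class. The wave function $\psi(q^{Ii},t)$ obeys the Schrödinger equation $i\hbar\partial_t\psi=\hat H\psi$, with $\hat p_{Ii}=-i\hbar\partial/\partial q^{Ii}$, and satisfies $\hat\gamma\psi=0$ for each constraint. Hamiltonians and constraints are assumed polynomial in the momenta, with a fixed operator ordering. Basic correspondence (Proposition 1): let $L^\sharp$ have order $N-1\ge1$ and $L=L^\sharp+dW/dt$ with $W=W(q^{(0)},\dots,q^{(N-1)},t)$. Treat $L$ by the extended formalism, with Hamiltonian $H^\sharp(\mathbf q_\sharp,\mathbf p_{\sharp}-\partial W/\partial\mathbf q_\sharp,t)-\partial W/\partial t$ and constraints $p_{N-1,i}-\partial W/\partial q^{N-1,i}$ and $\gamma^\sharp_a(\mathbf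 q_\sharp,\mathbf p_\sharp-\partial W/\partial\mathbf q_\sharp,t)$, where $\mathbf q_\sharp=(q^{Ai})_{A\le N-2}$. Then the physical wave functions of $L$ are exactly $\psi^\sharp(\mathbf q_\sharp,t)e^{iW/\hbar}$, with $\psi^\sharp$ ranging over the physical wave functions of $L^\sharp$. Such $L$ and $L^\sharp$ are called quantum mechanically equivalent, and ''quantum mechanically equivalent'' in general means related by a finite chain of such correspondences (in either direction). *)

From HB Require Import structures.
From mathcomp Require Import all_boot all_order all_algebra.
From mathcomp Require Import all_classical all_reals all_analysis.

Set Implicit Arguments.
Unset Strict Implicit.
Unset Printing Implicit Defensive.
Import Order.TTheory GRing.Theory Num.Theory.
Local Open Scope ring_scope.

Section Ostrogradski.
Variables (R : realType) (d : nat).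

(* A point of the (infinite) jet space: jet k i = q^{(k)i}. *)
Definition jet := nat -> 'I_d -> R.

(* Functions of the jet variables and of time t (Lagrangians, W's). *)
Definition jfun := jet -> R -> R.

(* Coordinates: None is time t, Some (k, i) is q^{(k)i}. *)
Definition coord := option (nat * 'I_d).

Definition upd (j : jet) (k : nat) (i : 'I_d) (s : R) : jet :=
  fun K' i' => if (K' == k) && (i' == i) then s else j K' i'.

Definition slice (c : coord) (f : jfun) (j : jet) (t : R) : R -> R :=
  match c with
  | None => fun s => f j s
  | Some (k, i) => fun s => f (upd j k i s) t
  end.

Definition cval (c : coord) (j : jet) (t : R) : R :=
  match c with None => t | Some (k, i) => j k i end.

Definition pd (c : coord) (f : jfun) : jfun :=
  fun j t => derive1 (slice c f j t) (cval c j t).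

Fixpoint diff_n (n : nat) (f : jfun) : Prop :=
  match n with
  | 0 => True
  | n'.+1 => forall c : coord,
      (forall j t, derivable (slice c f j t) (cval c j t) 1) /\ diff_n n' (pd c f)
  end.

Definition smooth (f : jfun) : Prop := forall n, diff_n n f.

Definition depends_upto (K : nat) (f : jfun) : Prop :=
  forall (j j' : jet) (t : R),
    (forall (k : nat) (i : 'I_d), (k <= K)%N -> j k i = j' k i) -> f j t = f j' t.

Definition tder (K : nat) (W : jfun) : jfun :=
  fun j t => pd None W j t +
    \sum_(k < K.+1) \sum_(i < d) pd (Some (nat_of_ord k, i)) W j t * j k.+1 i.

Definition jadd (f g : jfun) : jfun := fun j t => f j t + g j t.

Definition is_lagr (N : nat) (L : jfun) : Prop := smooth L /\ depends_upto N L.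

Definition prop1_corr (N : nat) (L : jfun) (Ls : jfun) : Prop :=
  (2 <= N)%N /\ is_lagr N.-1 Ls /\
  exists W : jfun, smooth W /\ depends_upto N.-1 W /\ L = jadd Ls (tder N.-1 W).

Inductive qm_equiv : nat * jfun -> nat * jfun -> Prop :=
  | qm_corr N L Ls : prop1_corr N L Ls -> qm_equiv (N, L) (N.-1, Ls)
  | qm_refl p : qm_equiv p p
  | qm_sym p q : qm_equiv p q -> qm_equiv q p
  | qm_trans p q r : qm_equiv p q -> qm_equiv q r -> qm_equiv p r.

End Ostrogradski.

From Pilot Require Import Defs.
From mathcomp Require Import all_boot all_order all_algebra.
From mathcomp Require Import all_classical all_reals all_analysis.

(* Two instances of Proposition 1 suffice.  With W = 0 it says that a
   Lagrangian of order N is equivalent to itself regarded as a Lagrangian of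
   order N + 1, so declared orders may be raised or lowered freely.  Regard
   L_n = L#_m + dW/dt as a Lagrangian of order n + 1: since W only involves
   q^(0), ..., q^(n-1), its total derivative is the same whether computed at
   order n - 1 or n, so Proposition 1 with this W relates it to L#_m at
   order n, which is then lowered to order m. *)

Set Implicit Arguments.
Unset Strict Implicit.
Unset Printing Implicit Defensive.
Import Order.TTheory GRing.Theory Num.Theory.
Local Open Scope ring_scope.

Section JetCalculus.
Variables (R : realType) (d : nat).
Local Notation jet := (jet R d).
Local Notation jfun := (jfun R d).

Definition jmul (f g : jfun) : jfun := fun j t => f j t * g j t.
Definition jcst (a : R) : jfun := fun _ _ => a.
Definition jcoord (k : nat) (i : 'I_d) : jfun := fun j _ => j k i.

Lemma upd_id (j : jet) k i : upd j k i (j k i) = j.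
Proof.
apply/funext => k'; apply/funext => i'; rewrite /upd.
by case: ifP => // /andP [/eqP -> /eqP ->].
Qed.

Lemma sliceD c (f g : jfun) j t :
  slice c (jadd f g) j t = slice c f j t + slice c g j t.
Proof. by case: c => [[k i]|]; apply/funext. Qed.

Lemma sliceM c (f g : jfun) j t :
  slice c (jmul f g) j t = slice c f j t * slice c g j t.
Proof. by case: c => [[k i]|]; apply/funext. Qed.

Lemma slice_cst c a j t : slice c (jcst a) j t = cst a.
Proof. by case: c => [[k i]|]; apply/funext. Qed.

Lemma pd_cst c a : pd c (jcst a) = jcst 0.
Proof.
by apply/funext => j; apply/funext => t; rewrite /pd slice_cst derive1_cst.
Qed.

Definition derivable_at (c : Defs.coord d) (f : jfun) : Prop :=
  forall j t, derivable (slice c f j t) (cval c j t) 1.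

Lemma pdD c (f g : jfun) : derivable_at c f -> derivable_at c g ->
  pd c (jadd f g) = jadd (pd c f) (pd c g).
Proof.
move=> df dg; apply/funext => j; apply/funext => t.
by rewrite /jadd /pd sliceD !derive1E deriveD.
Qed.

Lemma pdM c (f g : jfun) : derivable_at c f -> derivable_at c g ->
  pd c (jmul f g) = jadd (jmul f (pd c g)) (jmul g (pd c f)).
Proof.
move=> df dg; apply/funext => j; apply/funext => t.
rewrite /jadd /jmul /pd sliceM !derive1E deriveM //.
by case: c {df dg} => [[k i]|] /=; rewrite ?upd_id.
Qed.

Lemma smooth_pd c (f : jfun) : smooth f -> smooth (pd c f).
Proof. by move=> sf n; exact: (sf n.+1 c).2. Qed.

Lemma smooth_cst a : smooth (jcst a).
Proof.
move=> n; elim: n a => //= n IH a c; split; last by rewrite pd_cst.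
by move=> j t; rewrite slice_cst; exact: derivable_cst.
Qed.

Lemma diff_nD n (f g : jfun) : diff_n n f -> diff_n n g -> diff_n n (jadd f g).
Proof.
elim: n f g => //= n IH f g df dg c.
have [{}df dpf] := df c; have [{}dg dpg] := dg c; split.
  by move=> j t; rewrite sliceD; apply: derivableD.
by rewrite pdD //; exact: IH dpf dpg.
Qed.

Lemma smoothD (f g : jfun) : smooth f -> smooth g -> smooth (jadd f g).
Proof. by move=> sf sg n; apply: diff_nD. Qed.

Lemma smoothM (f g : jfun) : smooth f -> smooth g -> smooth (jmul f g).
Proof.
move=> sf sg n; elim: n f g sf sg => //= n IH f g sf sg c.
have [df _] := sf 1%N c; have [dg _] := sg 1%N c; split.
  by move=> j t; rewrite sliceM; apply: derivableM.
by rewrite pdM //; apply: diff_nD; apply: IH => //; exact: smooth_pd.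
Qed.

Lemma smooth_sum (I : Type) (r : seq I) (F : I -> jfun) :
  (forall x, smooth (F x)) -> smooth (fun j t => \sum_(x <- r) F x j t).
Proof.
move=> sF; elim: r => [|a r IH].
  have -> : (fun j t => \sum_(x <- [::]) F x j t) = jcst 0.
    by apply/funext => j; apply/funext => t; rewrite big_nil.
  exact: smooth_cst.
have -> : (fun j t => \sum_(x <- a :: r) F x j t) =
          jadd (F a) (fun j t => \sum_(x <- r) F x j t).
  by apply/funext => j; apply/funext => t; rewrite big_cons.
exact: smoothD.
Qed.

Lemma slice_coord c k i j t : exists b : bool,
  slice c (jcoord k i) j t = if b then id else cst (j k i).
Proof.
case: c => [[k' i']|]; last by exists false.
exists ((k == k') && (i == i')).
by apply/funext => s /=; rewrite /jcoord /upd; case: ifP.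
Qed.

Lemma smooth_coord k i : smooth (jcoord k i).
Proof.
case=> //= n c; split.
  move=> j t; have [[] ->] := slice_coord c k i j t.
    exact: derivable_id.
  exact: derivable_cst.
suff [a ->] : exists a, pd c (jcoord k i) = jcst a by exact: smooth_cst.
case: c => [[k' i']|]; last first.
  by exists 0; apply/funext => j; apply/funext => t; exact: derive1_cst.
exists (if (k == k') && (i == i') then 1 else 0).
apply/funext => j; apply/funext => t.
rewrite /pd /jcoord /jcst /= /upd /=; case: ifP => _.
  exact: derive1_id.
exact: derive1_cst.
Qed.

Lemma smooth_tder K (W : jfun) : smooth W -> smooth (tder K W).
Proof.
move=> sW.
change (smooth (jadd (pd None W) (fun j t => \sum_(k < K.+1)
  (fun j t => \sum_(i < d) jmul (pd (Some (nat_of_ord k, i)) W)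
                                  (jcoord k.+1 i) j t) j t))).
apply: smoothD; first exact: smooth_pd.
apply: smooth_sum => k; apply: smooth_sum => i.
apply: smoothM; [exact: smooth_pd | exact: smooth_coord].
Qed.

Lemma depends_upto_le K K' (f : jfun) :
  (K <= K')%N -> depends_upto K f -> depends_upto K' f.
Proof.
by move=> le_KK' df j j' t E; apply: df => k i /leq_trans/(_ le_KK'); exact: E.
Qed.

Lemma depends_uptoD K (f g : jfun) :
  depends_upto K f -> depends_upto K g -> depends_upto K (jadd f g).
Proof. by move=> df dg j j' t E; rewrite /jadd (df j j' t E) (dg j j' t E). Qed.

Lemma pd_indep K k i (f : jfun) :
  depends_upto K f -> (K < k)%N -> pd (Some (k, i)) f = jcst 0.
Proof.
move=> df lt_Kk; apply/funext => j; apply/funext => t; rewrite /pd /=.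
have -> : (fun s => f (upd j k i s) t) = cst (f j t).
  apply/funext => s; apply: df => k' i' le_k'K; rewrite /upd.
  by case: ifP => // /andP [/eqP eq_k' _]; move: lt_Kk; rewrite -eq_k' ltnNge le_k'K.
exact: derive1_cst.
Qed.

Lemma depends_upto_pd K c (f : jfun) :
  depends_upto K f -> depends_upto K (pd c f).
Proof.
move=> df j j' t E.
case: c => [[k i]|]; last first.
  by rewrite /pd /=; congr (derive1 _ _); apply/funext => s; exact: df.
have [le_kK | lt_Kk] := leqP k K; last by rewrite (pd_indep _ df lt_Kk).
rewrite /pd /= (E k i le_kK); congr (derive1 _ _); apply/funext => s.
by apply: df => k' i' le_k'K; rewrite /upd; case: ifP => // _; exact: E.
Qed.

Lemma depends_upto_tder K (W : jfun) :
  depends_upto K W -> depends_upto K.+1 (tder K W).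
Proof.
move=> dW j j' t E; have dW' := depends_upto_le (leqnSn K) dW.
rewrite /tder (depends_upto_pd None dW' t E); congr (_ + _).
apply: eq_bigr => k _; apply: eq_bigr => i _.
by rewrite (E k.+1 i) ?ltn_ord // (depends_upto_pd _ dW' t E).
Qed.

Lemma tderS K (W : jfun) : depends_upto K W -> tder K.+1 W = tder K W.
Proof.
move=> dW; apply/funext => j; apply/funext => t.
rewrite /tder big_ord_recr /=.
rewrite [X in _ + (_ + X)]big1 ?addr0 // => i _.
by rewrite (pd_indep _ dW) // /jcst mul0r.
Qed.

Lemma tder_cst0 K : tder K (jcst 0) = jcst 0.
Proof.
apply/funext => j; apply/funext => t; rewrite /tder pd_cst {1}/jcst add0r.
by rewrite big1 // => k _; rewrite big1 // => i _; rewrite pd_cst /jcst mul0r.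
Qed.

Lemma jadd0 (f : jfun) : jadd f (jcst 0) = f.
Proof. by apply/funext => j; apply/funext => t; rewrite /jadd addr0. Qed.

Lemma is_lagr_le N N' (L : jfun) : (N <= N')%N -> is_lagr N L -> is_lagr N' L.
Proof. by move=> le_NN' [sL dL]; split => //; exact: depends_upto_le dL. Qed.

Lemma is_lagr_add_tder N (Ls W : jfun) :
  is_lagr N.+1 Ls -> smooth W -> depends_upto N W ->
  is_lagr N.+1 (jadd Ls (tder N W)).
Proof.
move=> [sL dL] sW dW; split; first by apply: smoothD => //; exact: smooth_tder.
by apply: depends_uptoD => //; exact: depends_upto_tder.
Qed.

End JetCalculus.

Section QuantumEquivalence.
Variables (R : realType) (d : nat).
Local Notation jfun := (jfun R d).

Lemma qm_equiv_total_derivative N (Ls W : jfun) :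
  (0 < N)%N -> is_lagr N Ls -> smooth W -> depends_upto N W ->
  qm_equiv (N.+1, jadd Ls (tder N W)) (N, Ls).
Proof.
move=> N_gt0 lL sW dW; apply: (qm_corr (N := N.+1)).
by split => //; split => //; exists W.
Qed.

Lemma qm_equiv_succ_order N (L : jfun) :
  (0 < N)%N -> is_lagr N L -> qm_equiv (N.+1, L) (N, L).
Proof.
move=> N_gt0 lL; have L_eq : jadd L (tder N (jcst 0)) = L.
  by rewrite tder_cst0 jadd0.
by rewrite -{1}L_eq; apply: qm_equiv_total_derivative => //; exact: smooth_cst.
Qed.

Lemma qm_equiv_le_order N N' (L : jfun) :
  (0 < N)%N -> (N <= N')%N -> is_lagr N L -> qm_equiv (N', L) (N, L).
Proof.
move=> N_gt0 /subnKC <-; elim: (N' - N)%N => [|k IH] lL.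
  by rewrite addn0; exact: qm_refl.
apply: qm_trans (IH lL); rewrite addnS; apply: qm_equiv_succ_order.
  exact: leq_trans N_gt0 (leq_addr _ _).
exact: is_lagr_le (leq_addr _ _) lL.
Qed.

End QuantumEquivalence.

Theorem theorem1 (R : realType) (d n m : nat) (Ls W : jfun R d) :
  (1 <= m)%N -> (m <= n)%N ->
  is_lagr m Ls ->
  smooth W -> depends_upto n.-1 W ->
  qm_equiv (n, jadd Ls (tder n.-1 W)) (m, Ls).
Proof.
move=> m_gt0 le_mn lLs sW; case: n le_mn => [|K] le_mK1 dW /=.
  by have := leq_trans m_gt0 le_mK1.
have lLsK1 := is_lagr_le le_mK1 lLs.
have dW1 := depends_upto_le (leqnSn K) dW.
apply: qm_trans (qm_sym (qm_equiv_succ_order (ltn0Sn K) (is_lagr_add_tder lLsK1 sW dW))) _.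
rewrite -(tderS dW).
apply: qm_trans (qm_equiv_total_derivative (ltn0Sn K) lLsK1 sW dW1) _.
exact: qm_equiv_le_order.
Qed.
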